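(* Consider the queueing system in the context under MaxWeight with a diagonal matrix $\Delta$ with positive diagonal entries, in overload ($\rho\notin\mathcal{P}$), and let $\eta=\lim_{t\to\infty}X(t)/t$. Then $$\eta=\Big[\rho-\sum_{m=1}^N\alpha_mS_m\Big]^+$$ for some $\alpha_m\ge0$ with $\sum_m\alpha_m=1$. Furthermore, $\alpha_m>0$ implies $\eta\in C_{S_m}$, where $C_S=\{x\in\mathbb{R}^Q:\langle S,\Delta x\rangle=\max_{S'\in\mathcal{S}}\langle S',\Delta x\rangle\}$.
   Context: Model: $Q$ queues, finite set $\mathcal{S}=\{S_1,\dots,S_N\}\subset\mathbb{R}^Q_{\ge0}$, discrete time. Arrivals $A(t)$ with $0\le A_q(t)\le\bar A_q<\infty$ and $\rho_q=\lim_{t\to\infty}\frac1t\sum_{s=0}^{t-1}A_q(s)\in(0,\infty)$. Departures $D_q(t)=\min\{S_q(t),X_q(t)\}$, $X(t+1)=X(t)+A(t)-D(t)$, $X(0)=0$, with $S(t)\in\arg\max_{S\in\mathcal{S}}\langle S,\Delta X(t)\rangle$. $[x]^+$ is the componentwise positive part. Stability region $\mathcal{P}=\{r\in\mathbb{R}^Q_{\ge0}: r\le\sum_n\alpha_nS_n\text{ for some }\alpha_n\ge0,\sum_n\alpha_n=1\}$. (Under these assumptions $\lim_t X(t)/t$ exists.) *)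

From HB Require Import structures.
From mathcomp Require Import all_boot all_order all_algebra.
From mathcomp Require Import all_classical all_reals all_analysis.
Set Implicit Arguments. Unset Strict Implicit. Unset Printing Implicit Defensive.
Import Order.TTheory GRing.Theory Num.Theory.
Import numFieldNormedType.Exports.
Local Open Scope ring_scope.

Section QDefs.
Variables (R : realType) (Q N : nat).

(* weighted inner product <S, Delta x> with Delta = diag(delta) *)
Definition wip (delta : 'I_Q -> R) (s x : 'I_Q -> R) : R :=
  \sum_(q < Q) s q * (delta q * x q).

Definition in_stab_region (S : 'I_N -> 'I_Q -> R) (r : 'I_Q -> R) : Prop :=
  (forall q, 0 <= r q) /\
  exists alpha : 'I_N -> R,
    (forall n, 0 <= alpha n) /\ \sum_(n < N) alpha n = 1 /\
    forall q, r q <= \sum_(n < N) alpha n * S n q.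

Definition in_cone (S : 'I_N -> 'I_Q -> R) (delta : 'I_Q -> R) (n : 'I_N)
    (x : 'I_Q -> R) : Prop :=
  forall n' : 'I_N, wip delta (S n') x <= wip delta (S n) x.

(* MaxWeight dynamics: sched t is the index of the chosen schedule S(t) *)
Definition maxweight_dynamics (S : 'I_N -> 'I_Q -> R) (delta : 'I_Q -> R)
    (A X : nat -> 'I_Q -> R) (sched : nat -> 'I_N) : Prop :=
  (forall q, X 0%N q = 0) /\
  (forall t q, X t.+1 q = X t q + A t q - Num.min (S (sched t) q) (X t q)) /\
  (forall t, in_cone S delta (sched t) (X t)).

End QDefs.

From HB Require Import structures.
From mathcomp Require Import all_boot all_order all_algebra.
From mathcomp Require Import all_classical all_reals all_analysis.
From mathcomp Require Import ring lra zify.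
Import Order.TTheory GRing.Theory Num.Theory.
Import numFieldNormedType.Exports.
Local Open Scope classical_set_scope.
Local Open Scope ring_scope.

(* The empirical frequencies with which MaxWeight uses each schedule lie in
   the simplex, so some alpha in the simplex is a cluster point of them.
   Since X(t) is total arrivals minus total departures and departures never
   exceed the scheduled service, rho - eta <= sum_m alpha_m S_m.  When
   eta_q > 0, queue q is eventually longer than any service rate, so from then
   on it receives its full scheduled service and equality holds; together with
   eta >= 0 this is eta = [rho - sum_m alpha_m S_m]^+.  Finally, alpha_m > 0
   forces S_m to be scheduled infinitely often, each time with X(t) in the
   closed cone C_{S_m}, hence eta = lim X(t)/t lies in C_{S_m} as well. *)

Lemma cvg_nat_dist_lt {R : realType} {f : nat -> R} {l e : R} :
  f @ \oo --> l -> 0 < e -> exists T, forall t, (T <= t)%N -> `|l - f t| < e.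
Proof. by move=> /cvgrPdist_lt fl e0; have [T _ fT] := fl e e0; exists T. Qed.

Lemma cvg_le0_frequently {R : realType} {f : nat -> R} {l : R} :
  f @ \oo --> l -> (forall T, exists2 t, (T <= t)%N & f t <= 0) -> l <= 0.
Proof.
move=> fl f_le0; rewrite leNgt; apply/negP => l_gt0.
have [T fT] := cvg_nat_dist_lt fl l_gt0.
have [t Tt ft] := f_le0 T.
by move: (fT t Tt); rewrite ltr_norml => /andP[_]; lra.
Qed.

Lemma natr_eventually_gt {R : realType} (c : R) :
  exists T, forall t, (T <= t)%N -> c < t%:R.
Proof.
exists (Num.truncn c).+1 => t Tt.
by apply: lt_le_trans (truncnS_gt c) _; rewrite ler_nat.
Qed.

Lemma ler_addgt0Mr {R : realType} {x y : R} (c : R) : 0 <= c ->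
  (forall e, 0 < e -> x <= y + e * c) -> x <= y.
Proof.
move=> c_ge0 xy; apply/ler_addgt0Pr => e e0.
have c1 : 0 < c + 1 by lra.
apply: le_trans (xy (e / (c + 1)) (divr_gt0 e0 c1)) _.
by rewrite lerD2l mulrAC ler_pdivrMr // ler_wpM2l; lra.
Qed.

Lemma norm_sum_mulB_le {R : realType} {N} {a b w : 'I_N -> R} {e : R} :
  (forall n, `|a n - b n| < e) -> (forall n, 0 <= w n) ->
  `|\sum_n a n * w n - \sum_n b n * w n| <= e * \sum_n w n.
Proof.
move=> ab w_ge0; rewrite -sumrB mulr_sumr.
apply: le_trans (ler_norm_sum _ _ _) _; apply: ler_sum => n _.
by rewrite -mulrBl normrM (ger0_norm (w_ge0 n)) ler_wpM2r // ltW.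
Qed.

Lemma partial_sum_le_head {R : realType} (f : nat -> R) M T : 0 <= M ->
  (forall s, f s <= M) -> (forall s, (T <= s)%N -> f s <= 0) ->
  forall t, \sum_(s < t) f s <= T%:R * M.
Proof.
move=> M_ge0 f_leM f_le0 t.
suff : \sum_(s < t) f s <= (minn t T)%:R * M.
  by move/le_trans; apply; rewrite ler_wpM2r // ler_nat; lia.
elim: t => [|t IHt]; first by rewrite big_ord0 min0n mul0r.
rewrite big_ord_recr /=; case: (ltnP t T) => tT.
  rewrite (_ : minn t.+1 T = (minn t T).+1); last by lia.
  by rewrite -natr1 mulrDl mul1r lerD.
by rewrite (_ : minn t.+1 T = minn t T); [have := f_le0 t tT; lra | lia].
Qed.

Lemma rV_unit_box_cluster {R : realType} N (b : nat -> 'rV[R]_N) :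
  (forall t i, 0 <= b t ord0 i <= 1) ->
  exists a : 'rV[R]_N, forall e, 0 < e -> forall T,
    exists2 t, (T <= t)%N & forall i, `|a ord0 i - b t ord0 i| < e.
Proof.
move=> b_box.
have box_compact := @rV_compact R N (fun _ => `[0, 1]%classic)
  (fun _ => @segment_compact R 0 1).
have : (b @ \oo) [set v : 'rV[R]_N | forall i, `[0, 1]%classic (v ord0 i)].
  by exists 0%N => // t _ i /=; rewrite in_itv /= b_box.
move=> /box_compact [a [_ a_cluster]]; exists a => e e0 T.
have : (b @ \oo) (b @` [set t | (T <= t)%N]).
  by exists T => // t Tt /=; exists t.
move=> /(a_cluster _ _) /(_ (nbhsx_ballx a e e0)) [_ [[t Tt <-] [_ ball_t]]].
by exists t => // i; exact: ball_t.
Qed.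

Lemma wip_cvg {R : realType} Q (delta s : 'I_Q -> R) (x : nat -> 'I_Q -> R) y :
  (forall q, (fun t => x t q) @ \oo --> y q) ->
  (fun t => wip delta s (x t)) @ \oo --> wip delta s y.
Proof.
move=> xy; apply: cvg_big => // [|q _]; first exact: add_continuous.
by apply: cvgM; [exact: cvg_cst | apply: cvgM; [exact: cvg_cst | exact: xy]].
Qed.

Section MaxWeight.
Variables (R : realType) (Q N : nat).
Variables (S : 'I_N -> 'I_Q -> R) (delta : 'I_Q -> R).
Variables (A X : nat -> 'I_Q -> R) (sched : nat -> 'I_N) (rho eta : 'I_Q -> R).
Hypothesis S_ge0 : forall n q, 0 <= S n q.
Hypothesis A_ge0 : forall t q, 0 <= A t q.
Hypothesis X0 : forall q, X 0%N q = 0.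
Hypothesis X_rec :
  forall t q, X t.+1 q = X t q + A t q - Num.min (S (sched t) q) (X t q).
Hypothesis sched_maxweight : forall t, in_cone S delta (sched t) (X t).
Hypothesis A_mean_cvg :
  forall q, (fun t : nat => (\sum_(s < t) A s q) / t%:R) @ \oo --> rho q.
Hypothesis X_mean_cvg :
  forall q, (fun t : nat => X t q / t%:R) @ \oo --> eta q.

Definition departure s q := Num.min (S (sched s) q) (X s q).

Definition sched_count t n : R := \sum_(s < t) (sched s == n)%:R.

Definition sched_freq t n := sched_count t n / t%:R.

Definition freq_cluster (alpha : 'I_N -> R) := forall e, 0 < e -> forall T,
  exists2 t, (T <= t)%N & forall n, `|alpha n - sched_freq t n| < e.

Lemma sum_S_ge0 q : 0 <= \sum_n S n q.
Proof. exact: sumr_ge0. Qed.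

Lemma S_le_sum n q : S n q <= \sum_n' S n' q.
Proof. by rewrite (bigD1 n) //= lerDl sumr_ge0. Qed.

Lemma X_ge0 t q : 0 <= X t q.
Proof.
elim: t q => [|t IHt] q; first by rewrite X0.
rewrite X_rec; have := A_ge0 t q; have := IHt q.
have : Num.min (S (sched t) q) (X t q) <= X t q by rewrite ge_min lexx orbT.
lra.
Qed.

Lemma departure_ge0 s q : 0 <= departure s q.
Proof. by rewrite le_min S_ge0 X_ge0. Qed.

Lemma departure_le_S s q : departure s q <= S (sched s) q.
Proof. by rewrite ge_min lexx. Qed.

Lemma X_balance t q :
  X t q = \sum_(s < t) A s q - \sum_(s < t) departure s q.
Proof.
elim: t => [|t IHt]; first by rewrite X0 !big_ord0 subr0.
by rewrite X_rec -/(departure t q) !big_ord_recr /= IHt; ring.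
Qed.

Lemma sum_sched_S t q :
  \sum_(s < t) S (sched s) q = \sum_n sched_count t n * S n q.
Proof.
under [RHS]eq_bigr do rewrite mulr_suml.
rewrite exchange_big /=; apply: eq_bigr => s _.
rewrite (bigD1 (sched s)) //= eqxx mul1r big1 ?addr0 // => n sn.
by rewrite eq_sym (negbTE sn) mul0r.
Qed.

Lemma sum_sched_count t : \sum_n sched_count t n = t%:R.
Proof.
rewrite exchange_big /= -[t in RHS]card_ord -sumr_const.
apply: eq_bigr => s _.
rewrite (bigD1 (sched s)) //= eqxx big1 ?addr0 // => n sn.
by rewrite eq_sym (negbTE sn).
Qed.

Lemma sched_count_ge0 t n : 0 <= sched_count t n.
Proof. exact: sumr_ge0. Qed.

Lemma sched_count_le t n : sched_count t n <= t%:R.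
Proof.
rewrite -sum_sched_count (bigD1 n) //= lerDl.
by apply: sumr_ge0 => *; exact: sched_count_ge0.
Qed.

Lemma sched_freq_ge0 t n : 0 <= sched_freq t n.
Proof. by rewrite divr_ge0 ?sched_count_ge0. Qed.

Lemma sched_freq_le1 t n : sched_freq t n <= 1.
Proof.
case: t => [|t]; first by rewrite /sched_freq invr0 mulr0.
by rewrite ler_pdivrMr ?ltr0Sn // mul1r sched_count_le.
Qed.

Lemma sum_sched_freq t : (0 < t)%N -> \sum_n sched_freq t n = 1.
Proof.
by move=> t_gt0; rewrite -mulr_suml sum_sched_count divff // pnatr_eq0 -lt0n.
Qed.

Lemma sum_sched_freq_S t q :
  \sum_n sched_freq t n * S n q = (\sum_(s < t) S (sched s) q) / t%:R.
Proof.
rewrite sum_sched_S mulr_suml.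
by apply: eq_bigr => n _; rewrite /sched_freq; ring.
Qed.

Lemma exists_freq_cluster : exists alpha, freq_cluster alpha.
Proof.
have [|a a_cluster] :=
  @rV_unit_box_cluster R N (fun t => \row_n sched_freq t n).
  by move=> t n; rewrite mxE sched_freq_ge0 sched_freq_le1.
exists (fun n => a ord0 n) => e e0 T; have [t Tt at_e] := a_cluster e e0 T.
by exists t => // n; move: (at_e n); rewrite mxE.
Qed.

Lemma mean_departure_cvg q :
  (fun t : nat => (\sum_(s < t) departure s q) / t%:R) @ \oo --> rho q - eta q.
Proof.
suff -> : (fun t : nat => (\sum_(s < t) departure s q) / t%:R) =
    (fun t => (\sum_(s < t) A s q) / t%:R - X t q / t%:R) by exact: cvgB.
by apply/funext => t; rewrite X_balance; ring.
Qed.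

Lemma eta_ge0 q : 0 <= eta q.
Proof.
apply: (closed_cvg (fun x : R => 0 <= x) _ _ _ (X_mean_cvg q)).
  exact: closed_ge.
by apply: nearW => t; rewrite divr_ge0 ?X_ge0.
Qed.

Lemma X_eventually_ge_S q : 0 < eta q ->
  exists T, forall s, (T <= s)%N -> S (sched s) q <= X s q.
Proof.
move=> eta_gt0; have e0 : 0 < eta q / 2 by lra.
have [T1 X_near] := cvg_nat_dist_lt (X_mean_cvg q) e0.
have [T2 s_large] := natr_eventually_gt (2 * (\sum_n S n q) / eta q).
exists (maxn (maxn T1 T2) 1) => s Ts.
have s_gt0 : 0 < s%:R :> R by rewrite ltr0n; lia.
have := X_near s ltac:(lia); rewrite ltr_norml => /andP[_ Xs].
have : eta q / 2 * s%:R < X s q by rewrite -ltr_pdivlMr //; lra.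
have := s_large s ltac:(lia); rewrite ltr_pdivrMr //.
have := S_le_sum (sched s) q; nra.
Qed.

Lemma unserved_bounded q : 0 < eta q -> exists T, forall t,
  \sum_(s < t) (S (sched s) q - departure s q) <= T%:R * \sum_n S n q.
Proof.
move=> /X_eventually_ge_S [T XT]; exists T.
apply: (partial_sum_le_head (fun s => S (sched s) q - departure s q)).
- exact: sum_S_ge0.
- by move=> s; have := departure_ge0 s q; have := S_le_sum (sched s) q; lra.
- by move=> s Ts; rewrite /departure min_l ?XT // subrr.
Qed.

Lemma in_cone_of_scheduled_infinitely_often n :
  (forall T, exists2 t, (T <= t)%N & sched t = n) -> in_cone S delta n eta.
Proof.
move=> sched_io n'.
pose g t := wip delta (S n') (fun q => X t q / t%:R)
          - wip delta (S n) (fun q => X t q / t%:R).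
have g_cvg : g @ \oo --> wip delta (S n') eta - wip delta (S n) eta.
  by apply: cvgB; apply: wip_cvg.
rewrite -subr_le0; apply: (cvg_le0_frequently g_cvg) => T.
have [t Tt tn] := sched_io T; exists t => //.
have wip_div s : wip delta s (fun q => X t q / t%:R) = wip delta s (X t) / t%:R.
  by rewrite /wip mulr_suml; apply: eq_bigr => q _; ring.
rewrite /g !wip_div -mulrBl mulr_le0_ge0 // subr_le0.
by have := sched_maxweight t n'; rewrite tn.
Qed.

Section ClusterPoint.
Variable alpha : 'I_N -> R.
Hypothesis alpha_cluster : freq_cluster alpha.

Lemma cluster_ge0 n : 0 <= alpha n.
Proof.
apply/ler_addgt0Pr => e e0; have [t _ at_e] := alpha_cluster _ e0 0.
move: (at_e n); have := sched_freq_ge0 t n; rewrite ltr_norml.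
by move=> ? /andP[? _]; lra.
Qed.

Lemma cluster_sum1 : \sum_n alpha n = 1.
Proof.
apply/eqP; rewrite -subr_eq0 -normr_le0.
apply: (ler_addgt0Mr (N%:R)) => // e e0; rewrite add0r.
have [t t_gt0 at_e] := alpha_cluster _ e0 1.
rewrite -[X in `|_ - X|](sum_sched_freq _ t_gt0) -sumrB.
apply: le_trans (ler_norm_sum _ _ _) _.
apply: le_trans (ler_sum _ (fun n _ => ltW (at_e n))) _.
by rewrite sumr_const card_ord mulr_natr.
Qed.

Lemma cluster_service_approx q {e : R} : 0 < e ->
  forall T, exists2 t, (T <= t)%N &
  `|\sum_n alpha n * S n q - (\sum_(s < t) S (sched s) q) / t%:R|
    <= e * \sum_n S n q.
Proof.
move=> e0 T; have [t Tt at_e] := alpha_cluster _ e0 T; exists t => //.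
by rewrite -sum_sched_freq_S; exact: norm_sum_mulB_le.
Qed.

Lemma rho_sub_eta_le_service q : rho q - eta q <= \sum_n alpha n * S n q.
Proof.
apply: (ler_addgt0Mr (\sum_n S n q + 1)) => [|e e0].
  by have := sum_S_ge0 q; lra.
have [T D_near] := cvg_nat_dist_lt (mean_departure_cvg q) e0.
have [t Tt serv_near] := cluster_service_approx q e0 T.
have D_le_serv : (\sum_(s < t) departure s q) / t%:R
    <= (\sum_(s < t) S (sched s) q) / t%:R.
  by rewrite ler_wpM2r // ler_sum // => s _; exact: departure_le_S.
move: (D_near t Tt) serv_near; rewrite ltr_norml ler_norml.
by move=> /andP[? ?] /andP[? ?]; rewrite mulrDr mulr1; lra.
Qed.

Lemma service_le_rho_sub_eta q :
  0 < eta q -> \sum_n alpha n * S n q <= rho q - eta q.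
Proof.
move=> /unserved_bounded [T0 unserved].
apply: (ler_addgt0Mr (\sum_n S n q + 2)) => [|e e0].
  by have := sum_S_ge0 q; lra.
have [T1 D_near] := cvg_nat_dist_lt (mean_departure_cvg q) e0.
have [T2 t_large] := natr_eventually_gt (T0%:R * (\sum_n S n q) / e).
have [t Tt serv_near] := cluster_service_approx q e0 (maxn (maxn T1 T2) 1).
have t_gt0 : 0 < t%:R :> R by rewrite ltr0n; lia.
have head_small : T0%:R * (\sum_n S n q) / t%:R < e.
  by have := t_large t ltac:(lia); rewrite !ltr_pdivrMr //; lra.
have serv_le_D : (\sum_(s < t) S (sched s) q) / t%:R
    - T0%:R * (\sum_n S n q) / t%:R <= (\sum_(s < t) departure s q) / t%:R.
  rewrite -mulrBl ler_wpM2r //.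
  by have := unserved t; rewrite sumrB; lra.
move: (D_near t ltac:(lia)) serv_near; rewrite ltr_norml ler_norml.
by move=> /andP[? ?] /andP[? ?]; rewrite mulrDr; lra.
Qed.

Lemma eta_eq_pos_part q : eta q = Num.max 0 (rho q - \sum_n alpha n * S n q).
Proof.
move: (rho_sub_eta_le_service q); have := eta_ge0 q.
rewrite le_eqVlt => /orP[/eqP <- | eta_gt0] le_serv.
  by rewrite max_l //; lra.
by have ? := service_le_rho_sub_eta q eta_gt0; rewrite max_r; lra.
Qed.

Lemma cluster_gt0_scheduled_infinitely_often n : 0 < alpha n ->
  forall T, exists2 t, (T <= t)%N & sched t = n.
Proof.
move=> alpha_gt0 T.
have [//|never] := pselect (exists2 t, (T <= t)%N & sched t = n).
have unsched s : (T <= s)%N -> sched s != n.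
  by move=> Ts; apply/eqP => sn; apply: never; exists s.
have count_le t : sched_count t n <= T%:R.
  rewrite -[T%:R]mulr1.
  apply: (partial_sum_le_head (fun s => (sched s == n)%:R)) => //.
    by move=> s; case: (sched s == n).
  by move=> s Ts; rewrite (negbTE (unsched s Ts)).
have a2 : 0 < alpha n / 2 by lra.
have [T1 t_large] := natr_eventually_gt (2 * T%:R / alpha n).
have [t Tt at_e] := alpha_cluster _ a2 (maxn T1 1).
have t_gt0 : 0 < t%:R :> R by rewrite ltr0n; lia.
have : sched_freq t n <= T%:R / t%:R by rewrite ler_wpM2r.
have : T%:R / t%:R < alpha n / 2.
  by have := t_large t ltac:(lia); rewrite !ltr_pdivrMr //; nra.
by move: (at_e n); rewrite ltr_norml => /andP[_ ?]; lra.
Qed.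

End ClusterPoint.

End MaxWeight.

Theorem lemma8 (R : realType) (Q N : nat)
  (S : 'I_N -> 'I_Q -> R) (delta : 'I_Q -> R)
  (A X : nat -> 'I_Q -> R) (sched : nat -> 'I_N)
  (rho eta : 'I_Q -> R) :
  (forall n q, 0 <= S n q) ->
  (forall q, 0 < delta q) ->
  (exists Abar : 'I_Q -> R, forall t q, 0 <= A t q <= Abar q) ->
  (forall q, 0 < rho q) ->
  (forall q, (fun t : nat => (\sum_(s < t) A s q) / t%:R) @ \oo --> rho q) ->
  maxweight_dynamics S delta A X sched ->
  ~ in_stab_region S rho ->
  (forall q, (fun t : nat => X t q / t%:R) @ \oo --> eta q) ->
  exists alpha : 'I_N -> R,
    (forall n, 0 <= alpha n) /\ \sum_(n < N) alpha n = 1 /\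
    (forall q, eta q = Num.max 0 (rho q - \sum_(n < N) alpha n * S n q)) /\
    (forall n, 0 < alpha n -> in_cone S delta n eta).
Proof.
move=> S_ge0 _ [Abar A_bound] _ A_cvg [X0 [X_rec maxweight]] _ X_cvg.
have A_ge0 t q : 0 <= A t q by case/andP: (A_bound t q).
have [alpha cluster] := exists_freq_cluster R N sched.
exists alpha; split; [|split; [|split]].
- exact: (@cluster_ge0 R N sched alpha cluster).
- exact: (@cluster_sum1 R N sched alpha cluster).
- by apply: eta_eq_pos_part.
- move=> n alpha_gt0.
  apply: (@in_cone_of_scheduled_infinitely_often R Q N S delta X sched eta)
    => //.
  exact: (@cluster_gt0_scheduled_infinitely_often R N sched alpha cluster n).
Qed.
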